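(* Let $X,Y$ be Banach spaces. Then every element of $\mathrm{INA}_\pi(X\widehat{\otimes}_\pi Y)$ is a norm limit of elements of $\mathrm{FNA}_\pi(X\widehat{\otimes}_\pi Y)$; that is, $\mathrm{INA}_\pi(X\widehat{\otimes}_\pi Y)\subseteq\overline{\mathrm{FNA}_\pi(X\widehat{\otimes}_\pi Y)}^{\|\cdot\|_\pi}$.
   Context: Definition: $u\in X\widehat{\otimes}_\pi Y$ is an integral projective norm-attaining tensor, written $u\in\mathrm{INA}_\pi(X\widehat{\otimes}_\pi Y)$, if there is a finite positive Borel measure $\mu$ on $B_X\times B_Y$ (norm topology) such that $\varphi:B_X\times B_Y\to X\widehat{\otimes}_\pi Y$, $\varphi(x,y)=x\otimes y$, is $\mu$-Bochner integrable, $u=\int_{B_X\times B_Y}x\otimes y\,d\mu(x,y)$ (Bochner integral) and $\|\mu\|=\|u\|_\pi$; then $u$ is said to be witnessed by $\mu$. $\mathrm{FNA}_\pi(X\widehat{\otimes}_\pi Y)$ is the set of finitely norm-attaining tensors: those $u$ admitting a finite representation $u=\sum_{k=1}^n x_k\otimes y_k$ with $\sum_{k=1}^n\|x_k\|\|y_k\|=\|u\|_\pi$. *)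

From HB Require Import structures.
From mathcomp Require Import all_boot all_order all_algebra.
From mathcomp Require Import all_classical all_reals all_analysis.
Set Implicit Arguments. Unset Strict Implicit. Unset Printing Implicit Defensive.
Import Order.TTheory GRing.Theory Num.Theory.
Import numFieldNormedType.Exports.
Local Open Scope classical_set_scope.
Local Open Scope ring_scope.

Section Defs.
Variable R : realType.

Definition bilinear_map (X Y W : lmodType R) (B : X -> Y -> W) : Prop :=
  (forall (a : R) x1 x2 y, B (a *: x1 + x2) y = a *: B x1 y + B x2 y) /\
  (forall (a : R) x y1 y2, B x (a *: y1 + y2) = a *: B x y1 + B x y2).

(* (Z, tp) is the (completed) projective tensor product of X and Y:
   it is characterised up to isometric isomorphism by
   - tp bilinear with ||x (x) y|| <= ||x|| ||y||,
   - the linear span of elementary tensors is dense in Z,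
   - universal property: every bounded bilinear map B into a Banach space W
     factors through a bounded linear map T with ||T|| <= ||B||. *)
Definition is_projective_tensor_product (X Y Z : completeNormedModType R)
    (tp : X -> Y -> Z) : Prop :=
  [/\ bilinear_map tp,
      (forall x y, `|tp x y| <= `|x| * `|y|),
      (forall (z : Z) (e : R), 0 < e -> exists (n : nat) (x : nat -> X) (y : nat -> Y),
          `|z - \sum_(k < n) tp (x k) (y k)| < e) &
      (forall (W : completeNormedModType R) (B : X -> Y -> W) (C : R),
          bilinear_map B -> (forall x y, `|B x y| <= C * (`|x| * `|y|)) ->
          exists T : Z -> W,
            [/\ (forall (a : R) z1 z2, T (a *: z1 + z2) = a *: T z1 + T z2),
                (forall x y, T (tp x y) = B x y) &
                (forall z, `|T z| <= C * `|z|)])].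

Definition FNA (X Y Z : completeNormedModType R) (tp : X -> Y -> Z) : set Z :=
  [set u | exists (n : nat) (x : nat -> X) (y : nat -> Y),
      u = \sum_(k < n) tp (x k) (y k) /\
      \sum_(k < n) `|x k| * `|y k| = `|u| ].

Definition borelXY (X Y : completeNormedModType R) :=
  g_sigma_algebraType (@open (X * Y)%type).

Definition simple_eval {d} {T : measurableType d} {Z : normedModType R}
    (N : nat) (A : nat -> set T) (z : nat -> Z) (t : T) : Z :=
  \sum_(k < N) (\1_(A k) t : R) *: z k.

Definition simple_int {d} {T : measurableType d} {Z : normedModType R}
    (mu : {measure set T -> \bar R}) (N : nat) (A : nat -> set T) (z : nat -> Z) : Z :=
  \sum_(k < N) fine (mu (A k)) *: z k.

Definition strongly_measurable {d} {T : measurableType d} {Z : normedModType R}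
    (mu : {measure set T -> \bar R}) (f : T -> Z) : Prop :=
  exists (N : nat -> nat) (A : nat -> nat -> set T) (z : nat -> nat -> Z),
    (forall n k, measurable (A n k)) /\
    {ae mu, forall t, (fun n => simple_eval (N n) (A n) (z n) t) @ \oo --> f t}.

Definition bochner_integral {d} {T : measurableType d} {Z : normedModType R}
    (mu : {measure set T -> \bar R}) (f : T -> Z) (u : Z) : Prop :=
  strongly_measurable mu f /\
  exists (N : nat -> nat) (A : nat -> nat -> set T) (z : nat -> nat -> Z),
    [/\ (forall n k, measurable (A n k)),
        (fun n => (\int[mu]_t (`|f t - simple_eval (N n) (A n) (z n) t|)%:E)%E)
           @ \oo --> 0%E &
        (fun n => simple_int mu (N n) (A n) (z n)) @ \oo --> u].

Definition INA (X Y Z : completeNormedModType R) (tp : X -> Y -> Z) : set Z :=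
  [set u | exists mu : {measure set (borelXY X Y) -> \bar R},
      [/\ (mu setT < +oo)%E,
          mu (~` [set t : borelXY X Y | `|t.1| <= 1 /\ `|t.2| <= 1]) = 0%E,
          bochner_integral mu (fun t : borelXY X Y => tp t.1 t.2) u &
          mu setT = (`|u|)%:E] ].

End Defs.

From HB Require Import structures.
From mathcomp Require Import all_boot all_order all_algebra.
From mathcomp Require Import all_classical all_reals all_analysis.
From mathcomp Require Import lra measurable_realfun.
Import numFieldNormedType.Exports.
Import Order.TTheory GRing.Theory Num.Theory.
Local Open Scope classical_set_scope.
Local Open Scope ring_scope.

Set Implicit Arguments.
Unset Strict Implicit.
Unset Printing Implicit Defensive.

(* Hahn-Banach gives [phi] of
   norm at most one with [phi u = |u|]; then [g t := phi (t.1 (x) t.2)] is at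
   most 1 on [B_X * B_Y] and integrates to [|u| = mu setT], so [g = 1] almost
   everywhere.  A Riemann sum [v = sum_i c_i *: (x_i (x) y_i)] with [c_i >= 0]
   and points where [g = 1] satisfies
   [phi v = sum_i c_i >= sum_i c_i |x_i| |y_i| >= |v| >= phi v], so it is
   finitely norm-attaining; and such sums approximate [u], choosing on every
   atom of a simple approximation a point where the error is at most its
   average. *)

Section NormingFunctional.
Variables (R : realType) (Z : normedModType R) (u : Z).

(* Graphs of linear functionals defined on a subspace containing [u], dominated
   by the norm and taking the value [`|u|] at [u]; Zorn's lemma on these graphs
   is the Hahn-Banach argument. *)
Definition dominated_graph (G : set (Z * R)) :=
  [/\ G (u, `|u|),
      (forall a p q, G p -> G q -> G (a *: p.1 + q.1, a * p.2 + q.2)) &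
      (forall p, G p -> p.2 <= `|p.1|)].

Definition graph_extension (G : set (Z * R)) (z0 : Z) (c : R) :=
  [set q | exists p a, G p /\ q = (p.1 + a *: z0, p.2 + a * c)].

Lemma dominated_graph0 G : dominated_graph G -> G (0, 0).
Proof.
case=> Gu Glin _; have := Glin (-1) _ _ Gu Gu.
by rewrite /= scaleN1r mulN1r !addNr.
Qed.

Lemma dominated_graphZ G a p : dominated_graph G -> G p -> G (a *: p.1, a * p.2).
Proof.
move=> DG Gp; have [_ Glin _] := DG.
by have := Glin a _ _ Gp (dominated_graph0 DG); rewrite /= !addr0.
Qed.

Lemma dominated_graph_fun G z r r' :
  dominated_graph G -> G (z, r) -> G (z, r') -> r = r'.
Proof.
case=> _ Glin Gle Gr Gr'.
have := Gle _ (Glin (-1) _ _ Gr Gr'); have := Gle _ (Glin (-1) _ _ Gr' Gr).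
by rewrite /= !scaleN1r !addNr normr0 !mulN1r; lra.
Qed.

Lemma dominated_graph_line : dominated_graph [set (a *: u, a * `|u|) | a in setT].
Proof.
split.
- by exists 1 => //; rewrite scale1r mul1r.
- move=> a _ _ [b _ <-] [b' _ <-] /=; exists (a * b + b') => //.
  by rewrite scalerDl scalerA mulrDl mulrA.
- move=> _ [b _ <-] /=; rewrite normrZ.
  by apply: ler_wpM2r => //; exact: ler_norm.
Qed.

(* The one-dimensional step: [sup_p (p.2 - |p.1 - z0|) <= inf_q (|q.1 + z0| - q.2)]
   by the triangle inequality, and any [c] in between extends the graph to [z0]. *)
Lemma dominated_graph_gap G z0 : dominated_graph G -> exists c,
  (forall p, G p -> p.2 - `|p.1 - z0| <= c) /\
  (forall q, G q -> c <= `|q.1 + z0| - q.2).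
Proof.
case=> Gu Glin Gle.
pose E := [set p.2 - `|p.1 - z0| | p in G].
have Eub q : G q -> ubound E (`|q.1 + z0| - q.2).
  move=> Gq _ [p Gp <-].
  have := Gle _ (Glin 1 _ _ Gp Gq); rewrite /= scale1r mul1r.
  have : `|p.1 + q.1| <= `|p.1 - z0| + `|q.1 + z0|.
    by apply: le_trans (ler_normD _ _); rewrite addrACA addNr addr0.
  lra.
have E0 : E !=set0 by exists (`|u| - `|u - z0|), (u, `|u|).
have hE : has_ubound E by exists (`|u + z0| - `|u|); exact: Eub _ Gu.
exists (sup E); split=> [p Gp|q Gq]; first by apply: ub_le_sup => //; exists p.
by apply: ge_sup => //; exact: Eub.
Qed.

Lemma sub_graph_extension G z0 c : G `<=` graph_extension G z0 c.
Proof. by move=> p Gp; exists p, 0; rewrite scale0r mul0r !addr0 -surjective_pairing. Qed.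

Lemma dominated_graph_extension G z0 c : dominated_graph G ->
  (forall p, G p -> p.2 - `|p.1 - z0| <= c) ->
  (forall q, G q -> c <= `|q.1 + z0| - q.2) ->
  dominated_graph (graph_extension G z0 c).
Proof.
move=> DG c_ge c_le; have [Gu Glin Gle] := DG; split.
- exact: sub_graph_extension Gu.
- move=> a _ _ [p [b [Gp ->]]] [q [b' [Gq ->]]] /=.
  exists (a *: p.1 + q.1, a * p.2 + q.2), (a * b + b'); split; first exact: Glin.
  congr (_, _) => /=; first by rewrite scalerDr scalerA scalerDl addrACA.
  by rewrite mulrDr mulrA mulrDl addrACA.
- move=> _ [[z r] [a [Gzr ->]]] /=.
  have [->|a0] := eqVneq a 0; first by rewrite scale0r mul0r !addr0; exact: Gle Gzr.
  have := c_le _ (dominated_graphZ a^-1 DG Gzr).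
  have := c_ge _ (dominated_graphZ (- a^-1) DG Gzr).
  rewrite /= scaleNr -opprD normrN mulNr => c_ge' c_le'.
  have -> : z + a *: z0 = a *: (a^-1 *: z + z0).
    by rewrite scalerDr scalerA mulfV // scale1r.
  have -> : r + a * c = a * (a^-1 * r + c) by rewrite mulrDr mulrA mulfV // mul1r.
  rewrite normrZ; apply: le_trans (ler_norm _) _; rewrite normrM ler_wpM2l //.
  by rewrite ler_norml; apply/andP; split; lra.
Qed.

Lemma dominated_graph_chain (F : set (set (Z * R))) :
  F `<=` [set G | G = set0 \/ dominated_graph G] -> total_on F subset ->
  \bigcup_(G in F) G = set0 \/ dominated_graph (\bigcup_(G in F) G).
Proof.
move=> FP Ftot.
have [F0|/existsNP [G0 /not_implyP [FG0 G0n]]] := pselect (forall G, F G -> G = set0).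
  by left; apply/seteqP; split=> // p [G FG]; rewrite (F0 G FG).
have DF G p : F G -> G p -> dominated_graph G.
  by move=> FG Gp; case: (FP _ FG) => // G_0; move: Gp; rewrite G_0.
right; split.
- by have [//|DG0] := FP _ FG0; exists G0 => //; case: DG0.
- move=> a p q [G1 FG1 G1p] [G2 FG2 G2q].
  have [G12|G21] := Ftot _ _ FG1 FG2.
    by exists G2 => //; case: (DF _ _ FG2 G2q) => _ Glin _; apply: Glin => //; exact: G12.
  by exists G1 => //; case: (DF _ _ FG1 G1p) => _ Glin _; apply: Glin => //; exact: G21.
- by move=> p [G FG Gp]; case: (DF _ _ FG Gp) => _ _ Gle; exact: Gle.
Qed.

Lemma exists_norming_functional : exists phi : {linear Z -> R^o},
  (forall z, phi z <= `|z|) /\ phi u = `|u|.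
Proof.
have [A [PA Amax]] := Zorn_bigcup dominated_graph_chain.
have DA : dominated_graph A.
  case: PA => // A0; exfalso; apply: (Amax _ _ (or_intror dominated_graph_line)).
  rewrite A0; split; first exact: sub0set.
  by move/(_ (u, `|u|)); apply; exists 1 => //; rewrite scale1r mul1r.
have total z : exists r, A (z, r).
  apply/not_existsP => Az; have [c [c_ge c_le]] := dominated_graph_gap z DA.
  apply: (Amax (graph_extension A z c)).
    split; first exact: sub_graph_extension.
    move/(_ (z, c)) => Ac; apply: (Az c); apply: Ac; exists (0, 0), 1.
    by split; [exact: dominated_graph0|rewrite /= !add0r scale1r mul1r].
  by right; exact: dominated_graph_extension.
pose phi z := projT1 (cid (total z)).
have phiP z : A (z, phi z) by rewrite /phi; case: cid.
have [Au Alin Ale] := DA.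
have phi_lin : linear phi.
  by move=> a x y; apply: dominated_graph_fun DA (phiP _) (Alin a _ _ (phiP x) (phiP y)).
exists (HB.pack_for {linear Z -> R^o} phi (GRing.isLinear.Build _ _ _ _ phi phi_lin)).
by split=> [z|]; [exact: Ale (phiP z)|exact: dominated_graph_fun DA (phiP u) Au].
Qed.

End NormingFunctional.

Lemma dominated_linear_continuous (R : realType) (Z : normedModType R)
    (phi : {linear Z -> R^o}) :
  (forall z, phi z <= `|z|) -> continuous phi.
Proof.
move=> phi_le z; apply/cvgrPdist_lt => e e0.
apply: filterS (nbhsx_ballx z e e0) => y; rewrite -ball_normE /= => zy.
apply: le_lt_trans zy; rewrite -linearB ler_norml phi_le andbT.
by rewrite lerNl -linearN (le_trans (phi_le _)) // normrN.
Qed.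

Section BoundedBilinear.
Variables (R : realType) (X Y Z : normedModType R) (tp : X -> Y -> Z).
Hypothesis tp_bilinear : bilinear_map tp.
Hypothesis tp_bounded : forall x y, `|tp x y| <= `|x| * `|y|.

Lemma tpBl x x' y : tp (x - x') y = tp x y - tp x' y.
Proof.
case: tp_bilinear => tplin _; have := tplin (-1) x' x y.
by rewrite scaleN1r addrC => ->; rewrite scaleN1r addrC.
Qed.

Lemma tpBr x y y' : tp x (y - y') = tp x y - tp x y'.
Proof.
case: tp_bilinear => _ tplin; have := tplin (-1) x y' y.
by rewrite scaleN1r addrC => ->; rewrite scaleN1r addrC.
Qed.

Lemma tp0l y : tp 0 y = 0.
Proof. by have := tpBl 0 0 y; rewrite !subrr. Qed.

Lemma tpZl a x y : tp (a *: x) y = a *: tp x y.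
Proof.
by case: tp_bilinear => tplin _; have := tplin a x 0 y; rewrite !addr0 tp0l addr0.
Qed.

Lemma norm_sum_tp_le (I : Type) (s : seq I) (x : I -> X) (y : I -> Y) :
  `|\sum_(i <- s) tp (x i) (y i)| <= \sum_(i <- s) `|x i| * `|y i|.
Proof. by apply: le_trans (ler_norm_sum _ _ _) _; apply: ler_sum => i _. Qed.

Lemma tp_continuous : continuous (fun t : X * Y => tp t.1 t.2).
Proof.
move=> [x0 y0]; apply/subr_cvg0; apply/norm_cvg0P.
pose h (t : X * Y) := `|t.1 - x0| * `|t.2| + `|x0| * `|t.2 - y0|.
have h0 : h t @[t --> (x0, y0)] --> 0.
  have -> : 0 = h (x0, y0) by rewrite /h /= !subrr !normr0 mul0r mulr0 addr0.
  apply: cvgD; apply: cvgM; try apply: cvg_norm; try exact: cvg_cst.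
  - by apply: cvgB; [exact: cvg_fst|exact: cvg_cst].
  - exact: cvg_snd.
  - by apply: cvgB; [exact: cvg_snd|exact: cvg_cst].
apply: (squeeze_cvgr _ (cvg_cst (0 : R)) h0).
near=> t; rewrite normr_ge0 /=.
have -> : tp t.1 t.2 - tp x0 y0 = tp (t.1 - x0) t.2 + tp x0 (t.2 - y0).
  by rewrite tpBl tpBr addrA subrK.
by apply: le_trans (ler_normD _ _) _; apply: lerD.
Unshelve. all: by end_near.
Qed.

End BoundedBilinear.

Lemma continuous_open_measurable (R : realType) (V : normedModType R) (h : V -> R) :
  continuous h -> measurable_fun setT (h : g_sigma_algebraType (@open V) -> R).
Proof.
move=> ch; apply: (measurability _ (measurable_realfun.RGenOpens.measurableE R)).
move=> _ [_ [a [b ->]] <-]; rewrite setTI; apply: sub_sigma_algebra.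
by apply: (proj1 (continuousP h) ch); exact: interval_open.
Qed.

Lemma measurable_le_cst (R : realType) d (T : measurableType d) (h : T -> R) (c : R) :
  measurable_fun setT h -> measurable [set t | h t <= c].
Proof.
move=> mh; rewrite -[X in measurable X]setTI.
exact: (measurable_fun_le _ mh (measurable_cst c)).
Qed.

Section RiemannSums.
Variables (R : realType) (d : measure_display) (T : measurableType d).
Variable (Z : normedModType R).
Variable mu : {measure set T -> \bar R}.
Hypothesis mu_fin : (mu setT < +oo)%E.

Lemma fin_num_mu E : measurable E -> mu E \is a fin_num.
Proof.
move=> mE; rewrite ge0_fin_numE //.
by apply: le_lt_trans mu_fin; apply: le_measure => //; rewrite inE.
Qed.

Lemma fine_muK E : measurable E -> (fine (mu E))%:E = mu E.
Proof. by move=> mE; rewrite fineK // fin_num_mu. Qed.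

Lemma fine_mu_split E B : measurable E -> measurable B ->
  fine (mu (E `&` B)) + fine (mu (E `\` B)) = fine (mu E).
Proof.
move=> mE mB; rewrite (measureDI mu mE mB) fineD; first by rewrite addrC.
  exact: fin_num_mu (measurableD mE mB).
exact: fin_num_mu (measurableI _ _ mE mB).
Qed.

Variable P : set T.
Hypothesis P_conull : mu.-negligible (~` P).

Lemma exists_le_average (h : T -> R) (E : set T) (eta : R) :
  measurable E -> measurable_fun E h -> (forall t, 0 <= h t) ->
  0 < eta -> 0 < fine (mu E) ->
  exists2 t, E t /\ P t &
    ((fine (mu E) * h t)%:E <= \int[mu]_(t in E) (h t)%:E + eta%:E)%E.
Proof.
move=> mE mh h0 eta0 muE0; have [N [mN muN PN]] := P_conull.
have mEN : measurable (E `\` N) by exact: measurableD.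
have muEN : fine (mu (E `\` N)) = fine (mu E).
  rewrite -(fine_mu_split mE mN); suff -> : mu (E `&` N) = 0 by rewrite /= add0r.
  apply/eqP; rewrite eq_le measure_ge0 andbT -muN.
  by apply: le_measure => //; rewrite inE //; exact: measurableI.
set m := fine (mu E) in muE0 muEN *; set I := (\int[mu]_(t in E) (h t)%:E)%E.
have [//|no_t] := pselect (exists2 t, E t /\ P t & ((m * h t)%:E <= I + eta%:E)%E).
have above t : (E `\` N) t -> (I + eta%:E < (m * h t)%:E)%E.
  move=> [Et Nt]; rewrite ltNge; apply/negP => le_t; apply: no_t; exists t => //.
  by split=> //; apply: contrapT => /PN.
have [t0 ENt0] : E `\` N !=set0.
  by apply/set0P/negP => /eqP EN0; move: muE0; rewrite -muEN EN0 measure0 /= ltxx.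
have I0 : (0 <= I)%E by apply: integral_ge0 => t _; rewrite lee_fin.
have Ifin : I \is a fin_num.
  rewrite ge0_fin_numE //; apply: le_lt_trans (lt_trans (above _ ENt0) (ltry _)).
  by rewrite leeDl // lee_fin ltW.
rewrite -(fineK Ifin) in above; set r := fine I in above.
have r0 : 0 <= r := fine_ge0 I0.
have c_le t : (E `\` N) t -> ((r + eta) / m <= h t)%R.
  by move=> /above; rewrite -EFinD lte_fin ler_pdivrMr // mulrC => /ltW.
have : (\int[mu]_(t in E `\` N) (cst ((r + eta) / m)%:E) t <= I)%E.
  apply: (@le_trans _ _ (\int[mu]_(t in E `\` N) (h t)%:E)%E).
    apply: ge0_le_integral => //.
    - by move=> t _; rewrite lee_fin divr_ge0 ?(ltW muE0) //; lra.
    - by apply/measurable_EFinP; exact: measurable_funS mh.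
  apply: (ge0_subset_integral _ mEN mE); last exact: subDsetl.
  - exact/measurable_EFinP.
  - by move=> t _; rewrite lee_fin.
rewrite integral_cst // -fine_muK // muEN -EFinM mulfVK ?gt_eqF // -(fineK Ifin).
by rewrite lee_fin -/r; lra.
Qed.

(* [seval w] is the simple function [simple_eval] shifted by [w], and [sint E w]
   is its integral over [E]: in [riemann_sum_approx] the shift accumulates the
   values on the atoms already split off. *)
Definition seval (w : Z) N (A : nat -> set T) (z : nat -> Z) (t : T) : Z :=
  w + simple_eval N A z t.

Definition sint (E : set T) (w : Z) N (A : nat -> set T) (z : nat -> Z) : Z :=
  fine (mu E) *: w + \sum_(k < N) fine (mu (E `&` A k)) *: z k.

Lemma seval0 N A z t : seval 0 N A z t = simple_eval N A z t.
Proof. exact: add0r. Qed.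

Lemma sevalS_in w N A z t : A N t -> seval w N.+1 A z t = seval (w + z N) N A z t.
Proof.
move=> ANt; rewrite /seval /simple_eval big_ord_recr /= indicE mem_set //.
by rewrite scale1r addrA addrAC.
Qed.

Lemma sevalS_out w N A z t : ~ A N t -> seval w N.+1 A z t = seval w N A z t.
Proof.
move=> ANt; rewrite /seval /simple_eval big_ord_recr /= indicE memNset //.
by rewrite scale0r addr0.
Qed.

Lemma sint_setT0 N A z : sint setT 0 N A z = simple_int mu N A z.
Proof.
by rewrite /sint /simple_int scaler0 add0r; apply: eq_bigr => k _; rewrite setTI.
Qed.

Lemma sint_split E B w N A z : measurable E -> measurable B ->
  (forall k, measurable (A k)) ->
  sint E w N A z = sint (E `&` B) w N A z + sint (E `\` B) w N A z.
Proof.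
move=> mE mB mA; rewrite /sint -(fine_mu_split mE mB) scalerDl addrACA -big_split /=.
congr (_ + _); apply: eq_bigr => k _; rewrite -scalerDl; congr (_ *: _).
have mEA : measurable (E `&` A k) by exact: measurableI.
by rewrite -(fine_mu_split mEA mB) !setDE setIAC [_ `&` ~` B `&` _]setIAC.
Qed.

Lemma sintS E w N A z : measurable E -> (forall k, measurable (A k)) ->
  sint E w N.+1 A z = sint (E `&` A N) (w + z N) N A z + sint (E `\` A N) w N A z.
Proof.
move=> mE mA; set c := fine (mu (E `&` A N)).
have -> : sint E w N.+1 A z = sint E w N A z + c *: z N.
  by rewrite /sint big_ord_recr /= addrA.
have -> : sint (E `&` A N) (w + z N) N A z = sint (E `&` A N) w N A z + c *: z N.
  by rewrite /sint scalerDr addrAC.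
by rewrite (sint_split w N z mE (mA N) mA) addrAC.
Qed.

Variable f : T -> Z.
Hypothesis f_measurable : forall w, measurable_fun setT (fun t => `|f t - w|).

Lemma measurable_norm_sub_seval N A z w : (forall k, measurable (A k)) ->
  measurable_fun setT (fun t => `|f t - seval w N A z t|).
Proof.
move=> mA; elim: N w => [|N IH] w.
  have -> : (fun t => `|f t - seval w 0 A z t|) = (fun t => `|f t - w|).
    by apply/funext => t; rewrite /seval /simple_eval big_ord0 addr0.
  exact: f_measurable.
have -> : (fun t => `|f t - seval w N.+1 A z t|) =
    (fun t => (\1_(A N) t : R) * `|f t - seval (w + z N) N A z t| +
              (1 - \1_(A N) t) * `|f t - seval w N A z t|).
  apply/funext => t; rewrite indicE; have [ANt|ANt] := pselect (A N t).
    by rewrite mem_set // (sevalS_in _ _ ANt) mulr1n mul1r subrr mul0r addr0.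
  by rewrite memNset // (sevalS_out _ _ ANt) mulr0n mul0r add0r subr0 mul1r.
apply: measurable_funD; apply: measurable_funM => //.
by apply: measurable_funB => //; exact: measurable_indic.
Qed.

Lemma integral_sevalS E w N A z : measurable E -> (forall k, measurable (A k)) ->
  (\int[mu]_(t in E) `|f t - seval w N.+1 A z t|%:E =
   \int[mu]_(t in E `&` A N) `|f t - seval (w + z N) N A z t|%:E +
   \int[mu]_(t in E `\` A N) `|f t - seval w N A z t|%:E)%E.
Proof.
move=> mE mA; have mEA := measurableI _ _ mE (mA N).
have mEDA := measurableD mE (mA N).
rewrite -{1}(setUIDK E (A N)) ge0_integral_setU //.
- congr (_ + _)%E; apply: eq_integral => t; rewrite inE => -[_ ANt].
    by rewrite sevalS_in.
  by rewrite sevalS_out.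
- rewrite setUIDK; apply/measurable_EFinP.
  exact: measurable_funS measurableT (subsetT _) (measurable_norm_sub_seval _ _ _ mA).
- by rewrite disj_set2E setDE setICA -setIA setICr !setI0.
Qed.

Definition riemann_sum (l : seq (R * T)) : Z := \sum_(p <- l) p.1 *: f p.2.

Lemma riemann_sum_approx N A z : (forall k, measurable (A k)) ->
  forall E w (eta : R), measurable E -> 0 < eta -> exists l : seq (R * T),
  [/\ {in l, forall p, 0 <= p.1 /\ E p.2 /\ P p.2},
      \sum_(p <- l) p.1 = fine (mu E) &
      (`|riemann_sum l - sint E w N A z|%:E <=
        \int[mu]_(t in E) `|f t - seval w N A z t|%:E + eta%:E)%E].
Proof.
move=> mA; elim: N => [|N IH] E w eta mE eta0.
  rewrite /sint big_ord0 addr0.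
  under eq_integral do rewrite /seval /simple_eval big_ord0 addr0.
  have [m_gt0|m_le0] := ltrP 0 (fine (mu E)).
    have [t [Et Pt] le_t] := exists_le_average mE (measurable_funS measurableT
      (subsetT _) (f_measurable w)) (fun t => normr_ge0 _) eta0 m_gt0.
    exists [:: (fine (mu E), t)]; split; rewrite ?big_seq1 //.
      by move=> p; rewrite inE => /eqP -> /=; split; [exact: ltW|split].
    by rewrite /riemann_sum big_seq1 -scalerBr normrZ ger0_norm // ltW.
  have m0 : fine (mu E) = 0 by apply/eqP; rewrite eq_le m_le0 fine_ge0.
  exists [::]; split; rewrite ?big_nil //.
  rewrite /riemann_sum big_nil m0 scale0r subrr normr0 adde_ge0 //.
    by apply: integral_ge0 => t _; rewrite lee_fin.
  by rewrite lee_fin ltW.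
have mEA := measurableI _ _ mE (mA N); have mEDA := measurableD mE (mA N).
have eta2 : 0 < eta / 2 by rewrite divr_gt0.
have [l1 [l1P sum_l1 l1_le]] := IH _ (w + z N) _ mEA eta2.
have [l2 [l2P sum_l2 l2_le]] := IH _ w _ mEDA eta2.
exists (l1 ++ l2); split.
- move=> p; rewrite mem_cat => /orP[/l1P|/l2P] [p0 [[Ep _] Pp]] //.
- by rewrite big_cat /= sum_l1 sum_l2 fine_mu_split.
rewrite /riemann_sum big_cat /= sintS // integral_sevalS // (splitr eta) EFinD.
rewrite addeACA; apply: le_trans (leeD l1_le l2_le); rewrite -EFinD lee_fin.
by rewrite opprD addrACA ler_normD.
Qed.

Lemma bochner_simple_approx (u : Z) (eps : R) :
  bochner_integral mu f u -> 0 < eps ->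
  exists N A z, [/\ forall k, measurable (A k),
    (\int[mu]_t `|f t - simple_eval N A z t|%:E < eps%:E)%E &
    `|u - simple_int mu N A z| < eps].
Proof.
case=> _ [Ns [As [zs [mAs int_cvg sint_cvg]]]] eps0.
have eps0E : (0 < eps%:E)%E by rewrite lte_fin.
have int_near : \forall n \near \oo,
    (\int[mu]_t `|f t - simple_eval (Ns n) (As n) (zs n) t|%:E < eps%:E)%E.
  exact: int_cvg (open_ereal_lt' eps0E).
have sint_near : \forall n \near \oo, `|u - simple_int mu (Ns n) (As n) (zs n)| < eps.
  by move/cvgrPdist_lt : sint_cvg; apply.
have [n [int_lt sint_lt]] := filter_ex (filterI int_near sint_near).
by exists (Ns n), (As n), (zs n).
Qed.

Lemma bochner_riemann_split (u : Z) (B : set T) (eps : R) :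
  bochner_integral mu f u -> measurable B -> 0 < eps ->
  exists l1 l2 : seq (R * T),
  [/\ {in l1, forall p, 0 <= p.1 /\ B p.2 /\ P p.2},
      {in l2, forall p, 0 <= p.1 /\ ~ B p.2 /\ P p.2},
      \sum_(p <- l1) p.1 = fine (mu B),
      \sum_(p <- l2) p.1 = fine (mu (~` B)) &
      `|u - riemann_sum (l1 ++ l2)| < eps].
Proof.
move=> u_bochner mB eps0; have eps4 : 0 < eps / 4 by rewrite divr_gt0.
have [N [A [z [mA int_lt s_lt]]]] := bochner_simple_approx u_bochner eps4.
have [l1 [l1P sum_l1 l1_le]] := riemann_sum_approx N z mA 0 mB eps4.
have [l2 [l2P sum_l2 l2_le]] := riemann_sum_approx N z mA 0 (measurableC mB) eps4.
exists l1, l2; split => //.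
set s := simple_int _ _ _ _ in s_lt.
have s_split : s = sint B 0 N A z + sint (~` B) 0 N A z.
  by rewrite /s -sint_setT0 (sint_split 0 _ _ measurableT mB mA) setTI setTD.
have int_split : (\int[mu]_(t in B) `|f t - seval 0 N A z t|%:E +
    \int[mu]_(t in ~` B) `|f t - seval 0 N A z t|%:E =
    \int[mu]_t `|f t - simple_eval N A z t|%:E)%E.
  rewrite -(ge0_integral_setU _ mB (measurableC mB)).
  - by rewrite setUv; apply: eq_integral => t _; rewrite seval0.
  - by rewrite setUv; apply/measurable_EFinP; exact: measurable_norm_sub_seval.
  - by move=> t _; rewrite lee_fin.
  - by rewrite disj_set2E setICr.
have rs_lt : `|s - riemann_sum (l1 ++ l2)| < eps / 4 + eps / 4 + eps / 4.
  rewrite distrC -lte_fin; apply: le_lt_trans (le_trans _ (leeD l1_le l2_le)) _.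
    by rewrite -EFinD lee_fin /riemann_sum big_cat s_split opprD addrACA ler_normD.
  have -> : (eps / 4 + eps / 4 + eps / 4)%:E = ((eps / 4)%:E + (eps / 4 + eps / 4)%:E)%E.
    by rewrite -EFinD addrA.
  by rewrite addeACA int_split EFinD lteD2rE.
have := ler_distD s u (riemann_sum (l1 ++ l2)); lra.
Qed.

End RiemannSums.

Section INAClosure.
Variables (R : realType) (X Y Z : completeNormedModType R) (tp : X -> Y -> Z).
Hypothesis tp_bilinear : bilinear_map tp.
Hypothesis tp_bounded : forall x y, `|tp x y| <= `|x| * `|y|.
Local Notation T := (borelXY X Y).
Let f (t : T) : Z := tp t.1 t.2.
Let S := [set t : T | `|t.1| <= 1 /\ `|t.2| <= 1].

Variable phi : {linear Z -> R^o}.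
Hypothesis phi_le : forall z, phi z <= `|z|.
Let g (t : T) : R := phi (f t).

Lemma measurable_norm_sub_tp w : measurable_fun setT (fun t : T => `|f t - w|).
Proof.
apply: (@continuous_open_measurable R (X * Y)%type (fun t => `|tp t.1 t.2 - w|)) => t.
by apply: cvg_norm; apply: cvgB; [exact: tp_continuous|exact: cvg_cst].
Qed.

Lemma measurable_unit_balls : measurable S.
Proof.
apply: measurableI; apply: measurable_le_cst.
  apply: (@continuous_open_measurable R (X * Y)%type (fun t => `|t.1|)) => t.
  by apply: cvg_norm; exact: cvg_fst.
apply: (@continuous_open_measurable R (X * Y)%type (fun t => `|t.2|)) => t.
by apply: cvg_norm; exact: cvg_snd.
Qed.

Lemma measurable_phi_tp_le c : measurable (S `&` [set t | g t <= c]).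
Proof.
apply: measurableI; first exact: measurable_unit_balls.
apply: measurable_le_cst.
apply: (@continuous_open_measurable R (X * Y)%type (fun t => phi (tp t.1 t.2))) => t.
by apply: continuous_comp; [exact: tp_continuous|exact: dominated_linear_continuous].
Qed.

Lemma phi_tp_le1 t : S t -> g t <= 1.
Proof.
case=> x1 y1; apply: le_trans (phi_le _) (le_trans (tp_bounded _ _) _).
exact: mulr_ile1.
Qed.

Lemma phi_riemann_sum l : phi (riemann_sum f l) = \sum_(p <- l) p.1 * g p.2.
Proof. by rewrite linear_sum; apply: eq_bigr => p _; rewrite linearZ. Qed.

Lemma riemann_sum_FNA l : {in l, forall p, 0 <= p.1 /\ S p.2 /\ g p.2 = 1} ->
  FNA tp (riemann_sum f l).
Proof.
move=> lP; set v := riemann_sum f l.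
have v_tp : v = \sum_(p <- l) tp (p.1 *: p.2.1) p.2.2.
  by apply: eq_bigr => p _; rewrite tpZl.
have norm_le : \sum_(p <- l) `|p.1 *: p.2.1| * `|p.2.2| <= phi v.
  rewrite phi_riemann_sum big_seq [leRHS]big_seq.
  apply: ler_sum => p /lP [c0 [[x1 y1] ->]].
  by rewrite mulr1 normrZ ger0_norm // -mulrA ler_piMr // mulr_ile1.
have norm_eq : \sum_(p <- l) `|p.1 *: p.2.1| * `|p.2.2| = `|v|.
  apply/eqP; rewrite eq_le (le_trans norm_le (phi_le v)) /= {1}v_tp.
  exact: norm_sum_tp_le.
pose p0 : R * T := (0, (0, 0)).
exists (size l), (fun k => (nth p0 l k).1 *: (nth p0 l k).2.1),
  (fun k => (nth p0 l k).2.2).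
by rewrite -norm_eq v_tp !(big_nth p0) !big_mkord.
Qed.

Variables (u : Z) (mu : {measure set T -> \bar R}).
Hypothesis mu_fin : (mu setT < +oo)%E.
Hypothesis mu_S : mu (~` S) = 0.
Hypothesis u_bochner : bochner_integral mu f u.
Hypothesis mu_setT : mu setT = `|u|%:E.
Hypothesis phi_u : phi u = `|u|.

Lemma negligible_not_S : mu.-negligible (~` S).
Proof. by apply/negligibleP => //; exact: measurableC measurable_unit_balls. Qed.

(* A Riemann sum putting total weight [mu B] on points of [B] and the rest on
   [S] has [phi]-value at most [phi u - dl * mu B], yet it approximates [u]
   arbitrarily well. *)
Lemma phi_tp_level_null (dl : R) : 0 < dl ->
  mu (S `&` [set t | g t <= 1 - dl]) = 0.
Proof.
move=> dl0; set B := S `&` _.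
have mB : measurable B := measurable_phi_tp_le (1 - dl).
set beta := fine (mu B); have beta0 : 0 <= beta := fine_ge0 (measure_ge0 mu B).
suff : dl * beta <= 0.
  rewrite pmulr_rle0 // => beta_le0; rewrite -(fine_muK mu_fin mB) -/beta.
  by apply/eqP; rewrite eqe eq_le beta_le0.
apply/ler_addgt0Pr => e e0; rewrite add0r.
have [l1 [l2 [l1P l2P sum_l1 sum_l2 u_near]]] := bochner_riemann_split mu_fin
  negligible_not_S measurable_norm_sub_tp u_bochner mB e0.
have phi_l1 : \sum_(p <- l1) p.1 * g p.2 <= (1 - dl) * beta.
  rewrite /beta -sum_l1 mulr_sumr big_seq [leRHS]big_seq.
  by apply: ler_sum => p /l1P [c0 [[_ gp] _]]; rewrite [leRHS]mulrC ler_wpM2l.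
have phi_l2 : \sum_(p <- l2) p.1 * g p.2 <= fine (mu (~` B)).
  rewrite -sum_l2 big_seq [leRHS]big_seq.
  by apply: ler_sum => p /l2P [c0 [_ Sp]]; rewrite ler_piMr // phi_tp_le1.
have phi_near : `|u| <= \sum_(p <- l1) p.1 * g p.2 + \sum_(p <- l2) p.1 * g p.2
                        + `|u - riemann_sum f (l1 ++ l2)|.
  by rewrite -big_cat -phi_riemann_sum -phi_u -lerBlDl -linearB phi_le.
have norm_u : `|u| = beta + fine (mu (~` B)).
  rewrite -[`|u|]/(fine `|u|%:E) -mu_setT -(fine_mu_split mu_fin measurableT mB).
  by rewrite setTI setTD.
rewrite mulrBl mul1r in phi_l1; lra.
Qed.

Lemma ae_phi_tp_eq1 : mu.-negligible (~` [set t | S t /\ g t = 1]).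
Proof.
set bad := fun k : nat => S `&` [set t | g t <= 1 - k.+1%:R^-1].
have sub : ~` [set t | S t /\ g t = 1] `<=` ~` S `|` \bigcup_k bad k.
  move=> t /= not_good; have [St|] := pselect (S t); [right|by left].
  have g_lt1 : g t < 1.
    by rewrite lt_neqAle phi_tp_le1 // andbT; apply/eqP => gt1; apply: not_good.
  have [k gk] := ltr_add_invr g_lt1.
  by exists k => //; split => //=; rewrite lerBrDr ltW.
apply: negligibleS sub _; apply: negligibleU; first exact: negligible_not_S.
apply: negligible_bigcup => k; apply/negligibleP; first exact: measurable_phi_tp_le.
by apply: phi_tp_level_null; rewrite invr_gt0.
Qed.

Lemma INA_closure_FNA : closure (FNA tp) u.
Proof.
move=> U /nbhs_ballP [e e0 sub].
have [l1 [l2 [l1P l2P _ _ u_near]]] := bochner_riemann_split mu_fin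
  ae_phi_tp_eq1 measurable_norm_sub_tp u_bochner measurableT e0.
exists (riemann_sum f (l1 ++ l2)); split; last by apply: sub; rewrite -ball_normE.
apply: riemann_sum_FNA => p; rewrite mem_cat => /orP[/l1P|/l2P] [c0 [_ Pp]] //.
Qed.

End INAClosure.

Unset Implicit Arguments.

Theorem theorem2p11 (R : realType) (X Y Z : completeNormedModType R)
    (tp : X -> Y -> Z) :
  is_projective_tensor_product tp ->
  INA tp `<=` closure (FNA tp).
Proof.
move=> [tp_bilinear tp_bounded _ _] u [mu [mu_fin mu_S u_bochner mu_setT]].
have [phi [phi_le phi_u]] := exists_norming_functional u.
exact: (INA_closure_FNA tp_bilinear tp_bounded phi_le
  mu_fin mu_S u_bochner mu_setT phi_u).
Qed.
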